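(* Let $\mathbb{F}$ be an algebraically closed field of characteristic not three and let $(\mathcal{O},* )$ be the Okubo algebra over $\mathbb{F}$. Then any two idempotents of $(\mathcal{O},* )$ (nonzero elements $f$ with $f*f=f$) are conjugate under the automorphism group $\mathrm{Aut}(\mathcal{O},* )$.
   Context: Since $\mathbb{F}$ is algebraically closed of characteristic $\neq 3$, it contains a primitive cube root of unity $\omega$. The Okubo algebra is the vector space $\mathcal{O}=\mathfrak{sl}_3(\mathbb{F})$ of trace-zero $3\times 3$ matrices with multiplication \[ x*y=\omega xy-\omega^2 yx-\frac{\omega-\omega^2}{3}\mathrm{tr}(xy)1, \] where juxtaposition is the usual matrix product. *)

From HB Require Import structures.
From mathcomp Require Import all_boot all_order all_algebra.
Set Implicit Arguments. Unset Strict Implicit. Unset Printing Implicit Defensive.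
Import GRing.Theory.
Local Open Scope ring_scope.

(* The underlying space of the Okubo algebra: sl_3(F), trace-zero 3x3 matrices. *)
Definition sl3 {F : fieldType} (x : 'M[F]_3) : bool := \tr x == 0.

(* Okubo product  x*y = w xy - w^2 yx - (w - w^2)/3 tr(xy) 1  (defined on all
   3x3 matrices; it maps sl3 x sl3 into sl3). *)
Definition okubo_mul {F : fieldType} (w : F) (x y : 'M[F]_3) : 'M[F]_3 :=
  w *: (x *m y) - w ^+ 2 *: (y *m x)
  - ((w - w ^+ 2) / 3%:R * \tr (x *m y)) *: (1%:M : 'M[F]_3).

Definition okubo_idempotent {F : fieldType} (w : F) (f : 'M[F]_3) : Prop :=
  [/\ sl3 f, f != 0 & okubo_mul w f f = f].

(* It is represented by a function on all matrices whose restriction to sl3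
   is the automorphism (values outside sl3 are irrelevant). *)
Definition okubo_aut {F : fieldType} (w : F) (phi : 'M[F]_3 -> 'M[F]_3) : Prop :=
  [/\ (forall x, sl3 x -> sl3 (phi x)),
      (forall (a : F) x y, sl3 x -> sl3 y -> phi (a *: x + y) = a *: phi x + phi y),
      (forall x y, sl3 x -> sl3 y -> phi x = phi y -> x = y),
      (forall y, sl3 y -> exists2 x, sl3 x & phi x = y) &
      (forall x y, sl3 x -> sl3 y ->
         phi (okubo_mul w x y) = okubo_mul w (phi x) (phi y))].

(* For an idempotent e of the Okubo algebra, g = (w - w^2) e is a traceless
   matrix with g^2 - g = s 1.  Over an algebraically closed field g is then
   diagonalizable with eigenvalues among the roots a, 1 - a of X^2 - X - s,
   and tracelessness forces the spectrum (2, -1, -1).  So any two idempotents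
   are conjugate by an invertible matrix, and matrix conjugation is an
   automorphism of the Okubo algebra. *)

From HB Require Import structures.
From mathcomp Require Import all_boot all_order all_algebra perm ring.
Set Implicit Arguments. Unset Strict Implicit. Unset Printing Implicit Defensive.
Import GRing.Theory.
Local Open Scope ring_scope.

Lemma prim3_root_sum (R : idomainType) (w : R) :
  3.-primitive_root w -> w ^+ 2 + w + 1 = 0.
Proof.
move=> hw; have w_neq1 : w != 1 by rewrite -[w]expr1 -(prim_order_dvd hw 1).
have : (w - 1) * (w ^+ 2 + w + 1) = 0.
  by transitivity (w ^+ 3 - 1); [ring | rewrite prim_expr_order // subrr].
by move/eqP; rewrite mulf_eq0 subr_eq0 (negbTE w_neq1) => /eqP.
Qed.

Lemma prim3_root_diff_sqr (R : idomainType) (w : R) :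
  3.-primitive_root w -> (w - w ^+ 2) ^+ 2 = - 3%:R.
Proof.
move=> hw; have w3 := prim_expr_order hw.
transitivity ((w ^+ 2 + w + 1) - 3%:R + (w ^+ 3 - 1) * (w - 2%:R)); first ring.
by rewrite prim3_root_sum // w3; ring.
Qed.

Section Conjmx.
Variables (F : fieldType) (n : nat) (V : 'M[F]_n).

Lemma conjmxB f g : conjmx V (f - g) = conjmx V f - conjmx V g.
Proof. by rewrite /conjmx mulmxBr mulmxBl. Qed.

Lemma conjmxZ a f : conjmx V (a *: f) = a *: conjmx V f.
Proof. by rewrite /conjmx -scalemxAr -scalemxAl. Qed.

Lemma conjmxD f g : conjmx V (f + g) = conjmx V f + conjmx V g.
Proof. by rewrite /conjmx mulmxDr mulmxDl. Qed.

Hypothesis V_unit : V \in unitmx.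

Lemma conjmx_mulmx f g : conjmx V (f *m g) = conjmx V f *m conjmx V g.
Proof. by rewrite !conjumx // !mulmxA mulmxKV. Qed.

Lemma mxtrace_conjmx f : \tr (conjmx V f) = \tr f.
Proof. by rewrite conjumx // mxtrace_mulC mulmxA mulVmx ?mul1mx. Qed.

End Conjmx.

Lemma okubo_aut_conjmx (F : fieldType) (w : F) (Q : 'M[F]_3) :
  Q \in unitmx -> okubo_aut w (conjmx Q).
Proof.
move=> Q_unit; split.
- by move=> x; rewrite /sl3 mxtrace_conjmx.
- by move=> a x y _ _; rewrite conjmxD conjmxZ.
- by move=> x y _ _ /(congr1 (conjmx (invmx Q))); rewrite !conjmxK.
- move=> y y_sl3; exists (conjmx (invmx Q) y); last exact: conjmxVK.
  by rewrite /sl3 mxtrace_conjmx ?unitmx_inv.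
- move=> x y _ _; rewrite /okubo_mul !conjmxB !conjmxZ !conjmx_mulmx //.
  rewrite conjmx_scalar ?row_free_unit //.
  by rewrite -(mxtrace_conjmx Q_unit (x *m y)) conjmx_mulmx.
Qed.

Lemma okubo_idem_scaled_quadratic (F : fieldType) (w : F) (e : 'M[F]_3) :
  3.-primitive_root w -> okubo_mul w e e = e ->
  ((w - w ^+ 2) *: e) *m ((w - w ^+ 2) *: e) - (w - w ^+ 2) *: e
    = (- \tr (e *m e))%:M.
Proof.
move=> hw e_idem; have c2 := prim3_root_diff_sqr hw.
have n3 : 3%:R != 0 :> F := prim_root_natf_neq0 hw.
set c := w - w ^+ 2 in c2 *; set t := \tr (e *m e).
have e_expand : e = c *: (e *m e) - (c / 3%:R * t) *: 1%:M.
  by rewrite -{1}e_idem /okubo_mul -scalerBl.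
have ct : c * (c / 3%:R * t) = - t.
  by rewrite !mulrA -expr2 c2; field.
have ce : c *: e = - 3%:R *: (e *m e) + t%:M.
  rewrite {1}e_expand scalerBr !scalerA -expr2 c2 ct.
  by rewrite [(- t) *: _]scaleNr opprK scalemx1.
rewrite -scalemxAl -scalemxAr scalerA -expr2 c2 ce.
by rewrite [- (_ + t%:M)]opprD addNKr raddfN.
Qed.

Section QuadraticMatrix.
Variables (F : fieldType) (n : nat) (A : 'M[F]_n.+1) (a b : F).
Hypothesis A_quad : (A - a%:M) *m (A - b%:M) = 0.

Lemma mxminpoly_dvd_quadratic : mxminpoly A %| ('X - a%:P) * ('X - b%:P).
Proof.
by apply: mxminpoly_min; rewrite rmorphM !rmorphB /= horner_mx_X !horner_mx_C.
Qed.

Lemma root_char_poly_quadratic z : root (char_poly A) z -> z = a \/ z = b.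
Proof.
rewrite -root_mxminpoly => /(root_dvdp mxminpoly_dvd_quadratic).
by rewrite rootM !root_XsubC => /orP [] /eqP; [left | right].
Qed.

Lemma quadratic_similar_diag : a != b ->
  exists2 P, P \in unitmx & exists D : 'rV[F]_n.+1,
    P *m A = diag_mx D *m P /\ forall i, D 0 i = a \/ D 0 i = b.
Proof.
move=> neq_ab; have /diagonalizableP : exists2 rs, uniq rs &
    mxminpoly A %| \prod_(x <- rs) ('X - x%:P).
  exists [:: a; b]; first by rewrite /= inE neq_ab.
  by rewrite !big_cons big_nil mulr1 mxminpoly_dvd_quadratic.
case=> P P_unit /similar_diagPex [D simPAD].
exists P => //; exists D; split; first exact/(similarP P_unit).
have PAP : diag_mx D = conjmx P A by rewrite conjumx //; apply/(similarRL P_unit).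
have D_quad : (diag_mx D - a%:M) *m (diag_mx D - b%:M) = 0.
  have P_free : row_free P by rewrite row_free_unit.
  rewrite PAP -[a%:M](conjmx_scalar a P_free) -[b%:M](conjmx_scalar b P_free).
  by rewrite -!conjmxB -conjmx_mulmx // A_quad conjmx0.
move=> i; move/matrixP/(_ i i): D_quad.
rewrite -!diag_const_mx -!raddfB /= mulmx_diag !mxE eqxx mulr1n.
by move/eqP; rewrite mulf_eq0 !subr_eq0 => /orP [] /eqP; [left | right].
Qed.

End QuadraticMatrix.

Lemma mxtrace_char_poly_single_root (F : closedFieldType) n (A : 'M[F]_n.+1) a :
  (forall z, root (char_poly A) z -> z = a) -> \tr A = a *+ n.+1.
Proof.
move=> roots_a; have [r char_r] := closed_field_poly_normal (char_poly A).
rewrite (monicP (char_poly_monic A)) scale1r in char_r.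
have size_r : size r = n.+1.
  by have := size_char_poly A; rewrite char_r size_prod_XsubC; case.
have r_nseq : r = nseq n.+1 a.
  rewrite -size_r; apply/all_pred1P/allP => z z_r; apply/eqP/roots_a.
  by rewrite char_r root_prod_XsubC.
apply: oppr_inj; rewrite -(char_poly_trace A) // char_r -[n]/(n.+1.-1) -{1}size_r.
by rewrite coefPn_prod_XsubC ?size_r // r_nseq big_nseq iter_addr_0.
Qed.

Lemma ord3P (i : 'I_3) : [\/ i = 0, i = 1 | i = 2%:R].
Proof.
by case: i => [[|[|[|//]]] ?]; [constructor 1 | constructor 2 | constructor 3];
  apply: val_inj.
Qed.

Lemma sum_ord3 (V : nmodType) (x : 'I_3 -> V) : \sum_i x i = x 0 + x 1 + x 2%:R.
Proof.
rewrite !big_ord_recr big_ord0 /= add0r.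
by congr (x _ + x _ + x _); apply: val_inj.
Qed.

Definition idem_spectrum (F : fieldType) (k : 'I_3) : 'rV[F]_3 :=
  \row_i (if i == k then 2%:R else -1).

Lemma two_valued_sum0 (F : fieldType) (a x y z : F) : 3%:R != 0 :> F ->
  x + y + z = 0 -> (x = a \/ x = 1 - a) -> (y = a \/ y = 1 - a) ->
  (z = a \/ z = 1 - a) -> ~ [/\ x = 0, y = 0 & z = 0] ->
  [\/ [/\ x = 2%:R, y = -1 & z = -1], [/\ x = -1, y = 2%:R & z = -1]
    | [/\ x = -1, y = -1 & z = 2%:R]].
Proof.
move=> n3 + hx hy hz.
have a_m1 (u : F) : u + 1 = 0 -> u = -1 by move/eqP; rewrite addr_eq0 => /eqP.
have a_2 (u : F) : 2%:R - u = 0 -> u = 2%:R.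
  by move/eqP; rewrite subr_eq0 eq_sym => /eqP.
have a_0 (u : F) : u * 3%:R = 0 -> u = 0.
  by move/eqP; rewrite mulf_eq0 (negbTE n3) orbF => /eqP.
case: hx hy hz => -> [] -> [] -> xyz0 not0.
- by case: not0; rewrite (a_0 a); first split; rewrite -xyz0; ring.
- by constructor 3; rewrite (a_m1 a); first split; rewrite -?xyz0; ring.
- by constructor 2; rewrite (a_m1 a); first split; rewrite -?xyz0; ring.
- by constructor 1; rewrite (a_2 a); first split; rewrite -?xyz0; ring.
- by constructor 1; rewrite (a_m1 a); first split; rewrite -?xyz0; ring.
- by constructor 2; rewrite (a_2 a); first split; rewrite -?xyz0; ring.
- by constructor 3; rewrite (a_2 a); first split; rewrite -?xyz0; ring.
- by case: not0; rewrite (a_0 (1 - a)); first split; rewrite -?xyz0; ring.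
Qed.

Lemma two_valued_row_sum0 (F : fieldType) (a : F) (D : 'rV[F]_3) :
  3%:R != 0 :> F ->
  \sum_i D 0 i = 0 -> D != 0 -> (forall i, D 0 i = a \/ D 0 i = 1 - a) ->
  exists k, D = idem_spectrum F k.
Proof.
move=> n3 sumD D_neq0 D_vals; rewrite sum_ord3 in sumD.
have not0 : ~ [/\ D 0 0 = 0, D 0 1 = 0 & D 0 2%:R = 0].
  case=> D0 D1 D2; move/eqP: D_neq0; apply; apply/rowP => i.
  by rewrite mxE; case: (ord3P i) => ->.
have [[D0 D1 D2] | [D0 D1 D2] | [D0 D1 D2]] :=
  two_valued_sum0 n3 sumD (D_vals _) (D_vals _) (D_vals _) not0;
  [exists 0 | exists 1 | exists 2%:R]; apply/rowP => i; rewrite mxE;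
  by case: (ord3P i) => ->.
Qed.

Lemma perm_mx_diag (R : pzRingType) n (s : 'S_n) (d : 'rV[R]_n) :
  perm_mx s *m diag_mx d = diag_mx (col_perm s d) *m perm_mx s.
Proof.
rewrite -row_permE -[in RHS](invgK s) -col_permE invgK; apply/matrixP => i j.
rewrite !mxE -[j in s i == j](permKV s) (inj_eq perm_inj).
by case: eqP => [->|]; rewrite ?mulr0n ?mulr1n.
Qed.

Lemma col_perm_idem_spectrum (F : fieldType) (k : 'I_3) :
  col_perm (tperm 0 k) (idem_spectrum F k) = idem_spectrum F 0.
Proof.
apply/rowP => i; rewrite !mxE.
by rewrite -[k in _ == k](tpermL 0 k) (inj_eq perm_inj).
Qed.

Lemma quadratic_trace0_similar_spectrum
    (F : closedFieldType) (g : 'M[F]_3) (s : F) :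
  3%:R != 0 :> F -> \tr g = 0 -> g != 0 -> g *m g - g = s%:M ->
  exists2 P, P \in unitmx & P *m g = diag_mx (idem_spectrum F 0) *m P.
Proof.
move=> n3 tr_g g_neq0 g_quad.
have [a a_root] : exists a : F, a ^+ 2 = s + a.
  have [x x_root] := @GRing.solve_monicpoly F 2 (nth 0 [:: s; 1]) isT.
  exists x; rewrite x_root !big_ord_recl big_ord0 /=.
  by rewrite expr0 mulr1 expr1 mul1r addr0.
have [b b_def] : exists b, b = 1 - a by exists (1 - a).
have g_ab : (g - a%:M) *m (g - b%:M) = 0.
  have factor_ab : ('X - a%:P) * ('X - b%:P) = 'X^2 - 'X - s%:P :> {poly F}.
    have -> : s = a ^+ 2 - a by rewrite a_root addrK.
    by rewrite b_def !rmorphB rmorphXn /= rmorph1; ring.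
  have := congr1 (horner_mx g) factor_ab.
  rewrite rmorphM !rmorphB /= rmorphXn /= !horner_mx_X !horner_mx_C expr2.
  rewrite -mulmxE => ->.
  by rewrite g_quad subrr.
have neq_ab : a != b.
  apply/eqP => eq_ab; have : \tr g = a *+ 3.
    apply: mxtrace_char_poly_single_root => z /(root_char_poly_quadratic g_ab).
    by rewrite -eq_ab; case.
  rewrite tr_g => /esym/eqP.
  rewrite -mulr_natr mulf_eq0 (negbTE n3) orbF => /eqP a0.
  by move: eq_ab; rewrite b_def a0 subr0 => /eqP; rewrite eq_sym oner_eq0.
have [P P_unit [D [PgD D_vals]]] := quadratic_similar_diag g_ab neq_ab.
have sumD : \sum_i D 0 i = 0.
  rewrite -mxtrace_diag (_ : diag_mx D = conjmx P g) ?mxtrace_conjmx //.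
  by rewrite conjumx // PgD mulmxK.
have D_neq0 : D != 0.
  apply: contraNneq g_neq0 => D0.
  by rewrite -(mulKmx P_unit g) PgD D0 raddf0 mul0mx mulmx0.
rewrite b_def in D_vals.
have [k D_k] := two_valued_row_sum0 n3 sumD D_neq0 D_vals.
exists (perm_mx (tperm 0 k) *m P); first by rewrite unitmx_mul unitmx_perm.
by rewrite -mulmxA PgD D_k mulmxA perm_mx_diag col_perm_idem_spectrum mulmxA.
Qed.

Lemma prim3_root_diff_neq0 (R : idomainType) (w : R) :
  3.-primitive_root w -> w - w ^+ 2 != 0.
Proof.
move=> hw; apply/eqP => c0; have := prim3_root_diff_sqr hw.
rewrite c0 expr0n /= => /eqP; rewrite eq_sym oppr_eq0.
by rewrite (negbTE (prim_root_natf_neq0 hw)).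
Qed.

Lemma okubo_idempotent_similar_spectrum
    (F : closedFieldType) (w : F) (e : 'M[F]_3) :
  3.-primitive_root w -> okubo_idempotent w e ->
  exists2 P, P \in unitmx &
    P *m ((w - w ^+ 2) *: e) = diag_mx (idem_spectrum F 0) *m P.
Proof.
move=> hw [/eqP tr_e e_neq0 e_idem].
apply: quadratic_trace0_similar_spectrum (okubo_idem_scaled_quadratic hw e_idem).
- exact: prim_root_natf_neq0 hw.
- by rewrite mxtraceZ tr_e mulr0.
- by rewrite scaler_eq0 negb_or prim3_root_diff_neq0.
Qed.

Theorem theorem5p4 (F : closedFieldType) (hchar : 3%N \notin [pchar F])
  (w : F) (hw : 3.-primitive_root w) (e f : 'M[F]_3) :
  okubo_idempotent w e -> okubo_idempotent w f ->
  exists phi : 'M[F]_3 -> 'M[F]_3, okubo_aut w phi /\ phi e = f.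
Proof.
(* hchar is implied by hw (prim_root_natf_neq0), hence unused. *)
move=> e_idem f_idem.
have [Pe Pe_unit Pe_e] := okubo_idempotent_similar_spectrum hw e_idem.
have [Pf Pf_unit Pf_f] := okubo_idempotent_similar_spectrum hw f_idem.
set Q := invmx Pf *m Pe.
have Q_unit : Q \in unitmx by rewrite unitmx_mul unitmx_inv Pf_unit.
have Q_e : Q *m e = f *m Q.
  apply: (scalerI (prim3_root_diff_neq0 hw)).
  rewrite scalemxAr scalemxAl /Q -mulmxA Pe_e !mulmxA; congr (_ *m _).
  by rewrite -[diag_mx _](mulmxK Pf_unit) -Pf_f mulmxA mulKmx.
exists (conjmx Q); split; first exact: okubo_aut_conjmx.
by rewrite conjumx // Q_e mulmxK.
Qed.
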